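(* Let $V=\mathbb C^n$ with $n$ even and consider the rational map $\phi:\mathbb P(\Lambda^2V)\times\mathbb P(\Lambda^2V)\dashrightarrow\mathbb P(S^2V)$, $([A],[B])\mapsto[AJB-BJA]$. (a) If $n=2$, then $AJB-BJA=0$ for all $A,B\in\Lambda^2V$, so $\phi$ is nowhere defined. (b) If $n=4$, the image of $\phi$ in $\mathbb P^9=\mathbb P(S^2\mathbb C^4)$ is a Grassmannian $\mathbb G(2,5)$, i.e. a subvariety projectively equivalent to the Plücker embedding of the Grassmannian of $2$-planes in $\mathbb C^5$ in $\mathbb P(\Lambda^2\mathbb C^5)\cong\mathbb P^9$.
   Context: $\Lambda^2V$ and $S^2V$ denote skew-symmetric and symmetric $n\times n$ complex matrices, $n=2p$, and $J=\begin{bmatrix}0&I_p\\-I_p&0\end{bmatrix}$. *)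

From HB Require Import structures.
From mathcomp Require Import all_boot all_order all_algebra.
Set Implicit Arguments. Unset Strict Implicit. Unset Printing Implicit Defensive.
Import GRing.Theory Num.Theory.
Local Open Scope ring_scope.

Definition Jmx (R : pzRingType) (p : nat) : 'M[R]_(p + p) :=
  block_mx 0 1%:M (- 1%:M) 0.

Definition skew_mat (R : pzRingType) (n : nat) (A : 'M[R]_n) : Prop := A^T = - A.
Definition sym_mat (R : pzRingType) (n : nat) (A : 'M[R]_n) : Prop := A^T = A.

Definition phimx (R : pzRingType) (p : nat) (A B : 'M[R]_(p + p)) : 'M[R]_(p + p) :=
  A *m Jmx R p *m B - B *m Jmx R p *m A.

(* S spans a projective point in the image of phi : P(Λ²V) x P(Λ²V) --> P(S²V),
   i.e. [S] = [A J B - B J A] for skew A, B at which phi is defined. *)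
Definition in_image_phi (R : pzRingType) (p : nat) (S : 'M[R]_(p + p)) : Prop :=
  exists A B : 'M[R]_(p + p),
    [/\ skew_mat A, skew_mat B, phimx A B != 0 &
        exists c : R, c != 0 /\ S = c *: phimx A B].

(* K (a skew m x m matrix, i.e. an element of Λ²R^m) spans a point of the
   Plücker-embedded Grassmannian G(2,m): [K] = [u ∧ v] with u, v linearly
   independent, where u ∧ v is represented by u^T v - v^T u. *)
Definition in_plucker_grass2 (R : fieldType) (m : nat) (K : 'M[R]_m) : Prop :=
  exists u v : 'rV[R]_m,
    row_free (col_mx u v) /\
    exists c : R, c != 0 /\ K = c *: (u^T *m v - v^T *m u).

From HB Require Import structures.
From mathcomp Require Import all_boot all_order all_algebra.
From mathcomp.algebra_tactics Require Import ring.
Set Implicit Arguments. Unset Strict Implicit. Unset Printing Implicit Defensive.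
Import GRing.Theory Num.Theory.
Local Open Scope ring_scope.

(* The map phi([A],[B]) = [A J B - B J A] in dimensions n = 2 and n = 4.
   We work over any field of characteristic not 2; the complex numbers of the
   theorem are an instance.
   - For every n, phi(A, B) is symmetric when A, B are skew (phimx_sym), and
     phi vanishes on pairs of proportional matrices (phimx_scale_same).
   - (a) For n = 2 every skew matrix is a multiple of J, so phi = 0.
   - (b) For n = 4 we use coordinates.  A linear map prim5 : Λ²C⁴ -> C⁵
     (whose kernel is spanned by J) and an explicit linear isomorphism
     sym_to_skew5 : S²C⁴ -> Λ²C⁵ satisfy the key identity
         2 · sym_to_skew5 (A J B - B J A) = prim5 A ∧ prim5 B,
     with u ∧ v = uᵀv - vᵀu, and prim5 has an explicit linear section.  So
     sym_to_skew5 maps the image of phi onto the nonzero bivectors u ∧ v, and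
     u ∧ v ≠ 0 exactly when u, v are linearly independent (row_free_wedgeE):
     these are the points of the Plücker-embedded Grassmannian G(2,5). *)

Definition p0 : 'I_(1+1) := lshift 1 ord0.
Definition p1 : 'I_(1+1) := rshift 1 ord0.

Definition o0 : 'I_(2+2) := lshift 2 (@Ordinal 2 0 isT).
Definition o1 : 'I_(2+2) := lshift 2 (@Ordinal 2 1 isT).
Definition o2 : 'I_(2+2) := rshift 2 (@Ordinal 2 0 isT).
Definition o3 : 'I_(2+2) := rshift 2 (@Ordinal 2 1 isT).

Definition q0 : 'I_5 := @Ordinal 5 0 isT.
Definition q1 : 'I_5 := @Ordinal 5 1 isT.
Definition q2 : 'I_5 := @Ordinal 5 2 isT.
Definition q3 : 'I_5 := @Ordinal 5 3 isT.
Definition q4 : 'I_5 := @Ordinal 5 4 isT.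

Lemma ord2_cases (i : 'I_(1+1)) : i = p0 \/ i = p1.
Proof. by case: i => [[|[|k]] Hi]; [left|right|]; try apply: val_inj. Qed.

Lemma ord4_cases (i : 'I_(2+2)) : [\/ i = o0, i = o1, i = o2 | i = o3].
Proof.
case: i => [[|[|[|[|k]]]] Hi]; [apply: Or41|apply: Or42|apply: Or43|apply: Or44|by []];
  exact: val_inj.
Qed.

Lemma ord5_cases (i : 'I_5) : i = q0 \/ i = q1 \/ i = q2 \/ i = q3 \/ i = q4.
Proof.
case: i => [[|[|[|[|[|k]]]]] Hi];
  [left|right;left|right;right;left|right;right;right;left|right;right;right;right|by []];
  exact: val_inj.
Qed.

Ltac case2 i := case: (ord2_cases i) => [->|->].
Ltac case4 i := case: (ord4_cases i) => [->|->|->|->].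
Ltac case5 i := case: (ord5_cases i) => [->|[->|[->|[->|->]]]].

Section SkewSymmetric.
Variable R : comPzRingType.

Lemma skew_entry n (A : 'M[R]_n) : skew_mat A -> forall i j, A j i = - A i j.
Proof. by move/matrixP=> sA i j; have := sA i j; rewrite !mxE. Qed.

Lemma sym_entry n (A : 'M[R]_n) : sym_mat A -> forall i j, A j i = A i j.
Proof. by move/matrixP=> sA i j; have := sA i j; rewrite !mxE. Qed.

Lemma tr_Jmx p : (Jmx R p)^T = - Jmx R p.
Proof. by rewrite /Jmx tr_block_mx opp_block_mx !trmx0 linearN /= trmx1 !oppr0 opprK. Qed.

Lemma phimx_sym p (A B : 'M[R]_(p + p)) :
  skew_mat A -> skew_mat B -> sym_mat (phimx A B).
Proof.
move=> sA sB; rewrite /sym_mat /phimx raddfB /= !trmx_mul tr_Jmx sA sB.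
by rewrite !mulNmx !mulmxN !opprK !mulmxA addrC.
Qed.

Lemma phimx_scale_same p (M : 'M[R]_(p + p)) a b : phimx (a *: M) (b *: M) = 0.
Proof. by rewrite /phimx -!scalemxAl -!scalemxAr !scalerA mulrC subrr. Qed.

End SkewSymmetric.

(* In characteristic not 2 skew matrices have zero diagonal; for n = 2 this
   makes every skew matrix a multiple of J, which proves part (a). *)
Section CharNot2.
Variable R : fieldType.
Hypothesis two_neq0 : (2 : R) != 0.

(* The diagonal of a skew matrix vanishes, since 2 A i i = 0. *)
Lemma skew_diag n (A : 'M[R]_n) : skew_mat A -> forall i, A i i = 0.
Proof.
move=> sA i; move: (skew_entry sA i i) => /eqP; rewrite -subr_eq0 opprK -mulr2n -mulr_natl.
by rewrite mulf_eq0 (negbTE two_neq0) => /eqP.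
Qed.

Lemma skew2_Jmx (A : 'M[R]_(1+1)) : skew_mat A -> A = A p0 p1 *: Jmx R 1.
Proof.
move=> sA; apply/matrixP => i j; rewrite mxE /Jmx.
case2 i; case2 j;
  rewrite ?(block_mxEul, block_mxEur, block_mxEdl, block_mxEdr) !mxE /=
          ?(mulr0, mulr1, mulrN1);
  first [exact: skew_diag | done | exact: skew_entry].
Qed.

Lemma phimx_dim2 (A B : 'M[R]_(1+1)) : skew_mat A -> skew_mat B -> phimx A B = 0.
Proof. by move=> sA sB; rewrite (skew2_Jmx sA) (skew2_Jmx sB) phimx_scale_same. Qed.

End CharNot2.

Definition wedge {R : pzRingType} {m : nat} (u v : 'rV[R]_m) : 'M[R]_m :=
  u^T *m v - v^T *m u.

Section WedgeRank.
Variable R : fieldType.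

Lemma sum_delta2 m (F : 'I_m -> R) i j a b :
  \sum_k F k * ((k == i)%:R * a + (k == j)%:R * b) = F i * a + F j * b.
Proof.
have delta (c : R) l : \sum_k F k * ((k == l)%:R * c) = F l * c.
  rewrite (bigD1 l) //= eqxx mul1r big1 ?addr0 // => k /negbTE ->.
  by rewrite mul0r mulr0.
by rewrite -!delta -big_split; apply: eq_bigr => k _; rewrite mulrDr.
Qed.

(* If some 2x2 minor of the 2xm matrix (u; v) is nonzero, it yields a right
   inverse of (u; v). *)
Lemma wedge_row_free m (u v : 'rV[R]_m) : wedge u v != 0 -> row_free (col_mx u v).
Proof.
move=> nz_uv.
have /existsP[[i j] /= minor_nz] :
    [exists ij : 'I_m * 'I_m, u ord0 ij.1 * v ord0 ij.2 - v ord0 ij.1 * u ord0 ij.2 != 0].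
  apply: contraNT nz_uv => /existsPn no_minor; apply/eqP/matrixP => i j.
  by rewrite !mxE !big_ord1 !mxE; have /negbNE/eqP := no_minor (i, j).
pose d := u ord0 i * v ord0 j - v ord0 i * u ord0 j.
pose a (l : 'I_(1+1)) := (if l == p0 then v ord0 j else - u ord0 j) / d.
pose b (l : 'I_(1+1)) := (if l == p0 then - v ord0 i else u ord0 i) / d.
apply/row_freeP; exists (\matrix_(k, l) ((k == i)%:R * a l + (k == j)%:R * b l)).
rewrite mul_col_mx; apply/matrixP => r l.
case: (ord2_cases r) => ->; rewrite ?col_mxEu ?col_mxEd mxE;
  under eq_bigr => k _ do rewrite mxE;
  rewrite sum_delta2 /a /b; case: (ord2_cases l) => ->; rewrite !mxE /= /d; by field.
Qed.

(* If (u; v) Y = 1 and uᵀv = vᵀu, comparing the (0,1) entries of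
   (uY)ᵀ(vY) = (vY)ᵀ(uY) gives 1 = 0. *)
Lemma row_free_wedge m (u v : 'rV[R]_m) : row_free (col_mx u v) -> wedge u v != 0.
Proof.
move/row_freeP => [Y]; rewrite mul_col_mx => uvY; apply/eqP => /eqP.
rewrite subr_eq0 => /eqP uv_comm.
have {}uv_comm : (u *m Y)^T *m (v *m Y) = (v *m Y)^T *m (u *m Y).
  by rewrite !trmx_mul -!mulmxA (mulmxA u^T) uv_comm -mulmxA.
set U := u *m Y in uvY uv_comm; set V := v *m Y in uvY uv_comm; clearbody U V.
have U_p0 l : U ord0 l = (1%:M : 'M[R]_(1+1)) p0 l by rewrite -uvY /p0 col_mxEu.
have V_p1 l : V ord0 l = (1%:M : 'M[R]_(1+1)) p1 l by rewrite -uvY /p1 col_mxEd.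
move/matrixP: uv_comm => /(_ p0 p1); rewrite !mxE !big_ord1 !mxE !U_p0 !V_p1 !mxE /=.
by rewrite mul1r mul0r => /eqP; rewrite oner_eq0.
Qed.

Lemma row_free_wedgeE m (u v : 'rV[R]_m) : row_free (col_mx u v) = (wedge u v != 0).
Proof. by apply/idP/idP; [exact: row_free_wedge | exact: wedge_row_free]. Qed.

End WedgeRank.

Definition listmx (R : pzRingType) m n (l : seq (seq R)) : 'M[R]_(m,n) :=
  \matrix_(i,j) nth 0 (nth [::] l i) j.
Arguments listmx {R m n}.

Lemma Jmx2E (R : pzRingType) : Jmx R 2 =
  listmx [:: [::0;0;1;0]; [::0;0;0;1]; [::-1;0;0;0]; [::0;-1;0;0]].
Proof.
apply/matrixP => i j; rewrite /Jmx.
by case4 i; case4 j; rewrite ?(block_mxEul, block_mxEur, block_mxEdl, block_mxEdr) !mxE /= ?oppr0.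
Qed.

Section Coordinates.
Variable R : comPzRingType.

Lemma mulmx4E (A B : 'M[R]_(2+2)) i j :
  (A *m B) i j = A i o0 * B o0 j + A i o1 * B o1 j + A i o2 * B o2 j + A i o3 * B o3 j.
Proof.
rewrite mxE !big_ord_recl big_ord0 addr0 !addrA.
by congr (_ * _ + _ * _ + _ * _ + _ * _); f_equal; apply: val_inj.
Qed.

Definition skew4 (a b c d e g : R) : 'M[R]_(2+2) :=
  listmx [:: [::0;a;b;c]; [::-a;0;d;e]; [::-b;-d;0;g]; [::-c;-e;-g;0]].

Definition sym4 (s00 s01 s02 s03 s11 s12 s13 s22 s23 s33 : R) : 'M[R]_(2+2) :=
  listmx [:: [::s00;s01;s02;s03]; [::s01;s11;s12;s13]; [::s02;s12;s22;s23];
          [::s03;s13;s23;s33]].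

Definition skew5 (k01 k02 k03 k04 k12 k13 k14 k23 k24 k34 : R) : 'M[R]_5 :=
  listmx [:: [::0;k01;k02;k03;k04]; [::-k01;0;k12;k13;k14]; [::-k02;-k12;0;k23;k24];
          [::-k03;-k13;-k23;0;k34]; [::-k04;-k14;-k24;-k34;0]].

Lemma sym4_sym s00 s01 s02 s03 s11 s12 s13 s22 s23 s33 :
  sym_mat (sym4 s00 s01 s02 s03 s11 s12 s13 s22 s23 s33).
Proof. by apply/matrixP => i j; case4 i; case4 j; rewrite !mxE. Qed.

Lemma skew4_skew a b c d e g : skew_mat (skew4 a b c d e g).
Proof. by apply/matrixP => i j; case4 i; case4 j; rewrite !mxE /= ?opprK ?oppr0. Qed.

Lemma skew5_skew k01 k02 k03 k04 k12 k13 k14 k23 k24 k34 :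
  skew_mat (skew5 k01 k02 k03 k04 k12 k13 k14 k23 k24 k34).
Proof. by apply/matrixP => i j; case5 i; case5 j; rewrite !mxE /= ?opprK ?oppr0. Qed.

Lemma scale_skew5 (c : R) k01 k02 k03 k04 k12 k13 k14 k23 k24 k34 :
  c *: skew5 k01 k02 k03 k04 k12 k13 k14 k23 k24 k34 =
  skew5 (c * k01) (c * k02) (c * k03) (c * k04) (c * k12) (c * k13) (c * k14)
        (c * k23) (c * k24) (c * k34).
Proof. by apply/matrixP => i j; case5 i; case5 j; rewrite !mxE /=; ring. Qed.

Lemma add_skew5 k01 k02 k03 k04 k12 k13 k14 k23 k24 k34
                l01 l02 l03 l04 l12 l13 l14 l23 l24 l34 :
  skew5 k01 k02 k03 k04 k12 k13 k14 k23 k24 k34 +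
  skew5 l01 l02 l03 l04 l12 l13 l14 l23 l24 l34 =
  skew5 (k01 + l01) (k02 + l02) (k03 + l03) (k04 + l04) (k12 + l12) (k13 + l13)
        (k14 + l14) (k23 + l23) (k24 + l24) (k34 + l34).
Proof. by apply/matrixP => i j; case5 i; case5 j; rewrite !mxE /=; ring. Qed.

Lemma phimx_skew4 a b c d e g a' b' c' d' e' g' :
  phimx (skew4 a b c d e g) (skew4 a' b' c' d' e' g') =
  sym4 (2 * (c * a' - a * c'))          (a * b' - b * a' + e * a' - a * e')
       (d * c' - c * d' + g * a' - a * g') (c * b' - b * c' + e * c' - c * e')
       (2 * (a * d' - d * a'))          (b * d' - d * b' + d * e' - e * d')
       (c * d' - d * c' + g * a' - a * g') (2 * (d * g' - g * d'))
       (g * b' - b * g' + e * g' - g * e') (2 * (g * c' - c * g')).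
Proof.
apply/matrixP => i j; rewrite /phimx [LHS]mxE [X in _ + X]mxE !mulmx4E Jmx2E !mxE.
by case4 i; case4 j; rewrite /=; ring.
Qed.

(* The linear isomorphism S²C⁴ -> Λ²C⁵ identifying P(S²C⁴) with P(Λ²C⁵). *)
Definition sym_to_skew5 (S : 'M[R]_(2+2)) : 'M[R]_5 :=
  skew5 (- S o0 o0) (S o1 o1) (- S o0 o2 - S o1 o3) (S o0 o1)
        (- S o0 o2 + S o1 o3) (- S o3 o3) (S o0 o3) (S o2 o2) (- S o1 o2) (S o2 o3).

Lemma sym_to_skew5_is_linear : linear sym_to_skew5.
Proof.
move=> a S T; rewrite /sym_to_skew5 scale_skew5 add_skew5 !mxE.
by congr skew5; ring.
Qed.

HB.instance Definition _ := GRing.isLinear.Build R 'M[R]_(2+2) 'M[R]_5 *:%R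
  sym_to_skew5 sym_to_skew5_is_linear.

Lemma sym_to_skew5_sym4 s00 s01 s02 s03 s11 s12 s13 s22 s23 s33 :
  sym_to_skew5 (sym4 s00 s01 s02 s03 s11 s12 s13 s22 s23 s33) =
  skew5 (- s00) s11 (- s02 - s13) s01 (- s02 + s13) (- s33) s03 s22 (- s12) s23.
Proof. by rewrite /sym_to_skew5 /sym4 !mxE. Qed.

(* The projection Λ²C⁴ -> C⁵ along J, in coordinates. *)
Definition prim5 (A : 'M[R]_(2+2)) : 'rV[R]_5 :=
  listmx [:: [:: 2 * A o0 o1; 2 * A o0 o3; 2 * A o1 o2; 2 * A o2 o3; A o0 o2 - A o1 o3]].

Lemma prim5_skew4 a b c d e g :
  prim5 (skew4 a b c d e g) = listmx [:: [:: 2 * a; 2 * c; 2 * d; 2 * g; b - e]].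
Proof. by rewrite /prim5 /skew4 !mxE. Qed.

Lemma wedge5E (u v : 'rV[R]_5) : wedge u v =
  skew5 (u 0 q0 * v 0 q1 - v 0 q0 * u 0 q1) (u 0 q0 * v 0 q2 - v 0 q0 * u 0 q2)
        (u 0 q0 * v 0 q3 - v 0 q0 * u 0 q3) (u 0 q0 * v 0 q4 - v 0 q0 * u 0 q4)
        (u 0 q1 * v 0 q2 - v 0 q1 * u 0 q2) (u 0 q1 * v 0 q3 - v 0 q1 * u 0 q3)
        (u 0 q1 * v 0 q4 - v 0 q1 * u 0 q4) (u 0 q2 * v 0 q3 - v 0 q2 * u 0 q3)
        (u 0 q2 * v 0 q4 - v 0 q2 * u 0 q4) (u 0 q3 * v 0 q4 - v 0 q3 * u 0 q4).
Proof.
apply/matrixP => i j; rewrite /wedge; case5 i; case5 j;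
  rewrite !(mxE, big_ord_recl, big_ord0) /=; ring.
Qed.

Lemma sym_to_skew5_phimx_skew4 a b c d e g a' b' c' d' e' g' :
  2 *: sym_to_skew5 (phimx (skew4 a b c d e g) (skew4 a' b' c' d' e' g')) =
  wedge (prim5 (skew4 a b c d e g)) (prim5 (skew4 a' b' c' d' e' g')).
Proof.
rewrite phimx_skew4 sym_to_skew5_sym4 !prim5_skew4 wedge5E !mxE /= scale_skew5.
by congr skew5; ring.
Qed.

End Coordinates.

Section Isomorphism.
Variable R : fieldType.
Hypothesis two_neq0 : (2 : R) != 0.

Lemma skew4E (A : 'M[R]_(2+2)) : skew_mat A ->
  A = skew4 (A o0 o1) (A o0 o2) (A o0 o3) (A o1 o2) (A o1 o3) (A o2 o3).
Proof.
move=> sA; apply/matrixP => i j; case4 i; case4 j; rewrite !mxE /=;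
  first [done | exact: (skew_diag two_neq0 sA) | exact: skew_entry].
Qed.

Lemma skew5E (K : 'M[R]_5) : skew_mat K ->
  K = skew5 (K q0 q1) (K q0 q2) (K q0 q3) (K q0 q4) (K q1 q2) (K q1 q3) (K q1 q4)
            (K q2 q3) (K q2 q4) (K q3 q4).
Proof.
move=> sK; apply/matrixP => i j; case5 i; case5 j; rewrite !mxE /=;
  first [done | exact: (skew_diag two_neq0 sK) | exact: skew_entry].
Qed.

Lemma sym4E (S : 'M[R]_(2+2)) : sym_mat S ->
  S = sym4 (S o0 o0) (S o0 o1) (S o0 o2) (S o0 o3) (S o1 o1) (S o1 o2) (S o1 o3)
           (S o2 o2) (S o2 o3) (S o3 o3).
Proof.
move=> sS; apply/matrixP => i j; case4 i; case4 j; rewrite !mxE /=;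
  first [done | exact: sym_entry].
Qed.

Definition skew5_to_sym (K : 'M[R]_5) : 'M[R]_(2+2) :=
  sym4 (- K q0 q1) (K q0 q4) (- (K q0 q3 + K q1 q2) / 2) (K q1 q4) (K q0 q2)
       (- K q2 q4) ((K q1 q2 - K q0 q3) / 2) (K q2 q3) (K q3 q4) (- K q1 q3).

Lemma sym_to_skew5K (S : 'M[R]_(2+2)) : sym_mat S -> skew5_to_sym (sym_to_skew5 S) = S.
Proof.
move=> sS; rewrite {2}(sym4E sS) /skew5_to_sym /sym_to_skew5 /skew5 !mxE /=.
by congr sym4; field.
Qed.

Lemma skew5_to_symK (K : 'M[R]_5) : skew_mat K -> sym_to_skew5 (skew5_to_sym K) = K.
Proof.
move=> sK; rewrite {2}(skew5E sK) /skew5_to_sym sym_to_skew5_sym4.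
by congr skew5; field.
Qed.

Lemma sym_to_skew5_inj (S T : 'M[R]_(2+2)) :
  sym_mat S -> sym_mat T -> sym_to_skew5 S = sym_to_skew5 T -> S = T.
Proof. by move=> sS sT eST; rewrite -(sym_to_skew5K sS) -(sym_to_skew5K sT) eST. Qed.

Lemma sym_to_skew5_phimx (A B : 'M[R]_(2+2)) : skew_mat A -> skew_mat B ->
  sym_to_skew5 (phimx A B) = 2^-1 *: wedge (prim5 A) (prim5 B).
Proof.
move=> sA sB; rewrite (skew4E sA) (skew4E sB) -sym_to_skew5_phimx_skew4.
by rewrite scalerA mulVf // scale1r.
Qed.

Definition prim5_lift (u : 'rV[R]_5) : 'M[R]_(2+2) :=
  skew4 (u 0 q0 / 2) (u 0 q4 / 2) (u 0 q1 / 2) (u 0 q2 / 2) (- (u 0 q4 / 2)) (u 0 q3 / 2).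

Lemma prim5_liftK (u : 'rV[R]_5) : prim5 (prim5_lift u) = u.
Proof.
apply/matrixP => i j; rewrite ord1 prim5_skew4; case5 j; rewrite !mxE /=; by field.
Qed.

Lemma prim5_lift_skew (u : 'rV[R]_5) : skew_mat (prim5_lift u).
Proof. exact: skew4_skew. Qed.

(* The forward inclusion: phi([A],[B]) = [prim5 A ∧ prim5 B], a point of G(2,5). *)
Lemma image_phi_in_plucker (S : 'M[R]_(2+2)) :
  in_image_phi S -> in_plucker_grass2 (sym_to_skew5 S).
Proof.
move=> [A [B [sA sB nz_phi [c [nz_c ->]]]]].
exists (prim5 A), (prim5 B); split.
  rewrite row_free_wedgeE; apply: contra nz_phi => /eqP wedge0.
  apply/eqP/sym_to_skew5_inj; [exact: phimx_sym | by rewrite /sym_mat trmx0 | ].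
  by rewrite sym_to_skew5_phimx // wedge0 scaler0 linear0.
exists (c / 2); split; first by rewrite mulf_neq0 ?invr_eq0.
by rewrite linearZ /= sym_to_skew5_phimx // scalerA.
Qed.

(* The reverse inclusion: [u ∧ v] = phi([prim5_lift u], [prim5_lift v]). *)
Lemma plucker_in_image_phi (S : 'M[R]_(2+2)) :
  sym_mat S -> in_plucker_grass2 (sym_to_skew5 S) -> in_image_phi S.
Proof.
move=> sS [u [v [free_uv [c [nz_c fS]]]]].
have [skew_u skew_v] := (prim5_lift_skew u, prim5_lift_skew v).
have nz_uv : wedge u v != 0 by rewrite -row_free_wedgeE.
have f_phi : sym_to_skew5 (phimx (prim5_lift u) (prim5_lift v)) = 2^-1 *: wedge u v.
  by rewrite sym_to_skew5_phimx // !prim5_liftK.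
exists (prim5_lift u), (prim5_lift v); split => //.
  apply: contra nz_uv => /eqP phi0; move: f_phi; rewrite phi0 linear0 => /esym/eqP.
  by rewrite scaler_eq0 invr_eq0 (negbTE two_neq0).
exists (c * 2); split; first by rewrite mulf_neq0.
apply: sym_to_skew5_inj => //; first by rewrite /sym_mat linearZ /= phimx_sym.
by rewrite fS linearZ /= f_phi scalerA mulfK.
Qed.

End Isomorphism.

Theorem mainTheorem12 (C : numClosedFieldType) :
  (* (a) n = 2 : phi vanishes identically *)
  (forall A B : 'M[C]_(1 + 1), skew_mat A -> skew_mat B -> phimx A B = 0) /\
  (* (b) n = 4 : the image of phi in P(S^2 C^4) = P^9 is projectively equivalent
     to the Plücker embedding of G(2,5) in P(Λ^2 C^5) = P^9 *)
  (exists f : {linear 'M[C]_(2 + 2) -> 'M[C]_5},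
     (forall S, sym_mat S -> skew_mat (f S)) /\
     (forall S1 S2, sym_mat S1 -> sym_mat S2 -> f S1 = f S2 -> S1 = S2) /\
     (forall K, skew_mat K -> exists S, sym_mat S /\ f S = K) /\
     (forall S, sym_mat S -> (in_image_phi S <-> in_plucker_grass2 (f S)))).
Proof.
have two : (2 : C) != 0 by rewrite pnatr_eq0.
split; first exact: phimx_dim2.
exists (@sym_to_skew5 C); split; first by move=> S _; apply: skew5_skew.
split; first exact: sym_to_skew5_inj.
split.
  by move=> K sK; exists (skew5_to_sym K); split; [apply: sym4_sym | apply: skew5_to_symK].
move=> S sS; split; first exact: image_phi_in_plucker.
exact: plucker_in_image_phi.
Qed.
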